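(* Let $Q_d$ be the $d$-dimensional hypercube graph, with $n = 2^d$ vertices. Then $\chi_{2K_2}(Q_2) = 2$, $\chi_{2K_2}(Q_3) = 4$, and for every $d \ge 4$, $$\chi_{2K_2}(Q_d) \ge \sqrt{\frac{d}{2d-1}\,2^d} + \frac12 = \sqrt{\frac{n}{2}\cdot\frac{1}{1 - 1/(2\lg n)}} + \frac12,$$ where $\lg$ denotes the base-2 logarithm.
   Context: All graphs are finite and simple. For a fixed bipartite graph $H$, a proper vertex coloring of a graph $G$ is called an $H$-avoiding coloring if for any two color classes, the subgraph of $G$ induced by their union contains no induced subgraph isomorphic to $H$. $\chi_H(G)$ denotes the minimum number of colors in an $H$-avoiding coloring of $G$. $2K_2$ is the disjoint union of two edges. $Q_d$ has vertex set $\{0,1\}^d$, two vertices adjacent iff they differ in exactly one coordinate. *)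

From mathcomp Require Import all_boot all_order all_algebra.
From mathcomp Require Import reals.
Set Implicit Arguments. Unset Strict Implicit. Unset Printing Implicit Defensive.

(* A graph is a relation e on a finite vertex type; simple graphs are those
   with e symmetric and irreflexive (as is the case for all graphs below). *)

Section HAvoid.
Variables (TH : finType) (eH : rel TH) (TG : finType) (eG : rel TG).

Definition has_induced_copy (S : {set TG}) : bool :=
  [exists f : {ffun TH -> TG},
     [&& injectiveb f, [forall x, f x \in S] &
         [forall x, forall y, eH x y == eG (f x) (f y)]]].

Definition proper_coloring k (c : {ffun TG -> 'I_k}) : bool :=
  [forall x, forall y, eG x y ==> (c x != c y)].

Definition H_avoiding_coloring k (c : {ffun TG -> 'I_k}) : bool :=
  proper_coloring c &&
  [forall a : 'I_k, forall b : 'I_k,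
     ~~ has_induced_copy [set v | (c v == a) || (c v == b)]].

Definition H_avoiding_colorable (k : nat) : bool :=
  [exists c : {ffun TG -> 'I_k}, H_avoiding_coloring c].

(* For a simple graph G, k = #|TG| always works (injective coloring), so the
   minimum below is attained in the range and is the true minimum. *)
Definition chi_H : nat :=
  \big[minn/#|TG|]_(k < #|TG|.+1 | H_avoiding_colorable k) (k : nat).
End HAvoid.

(* 2K_2 : vertices 0,1,2,3 with edges {0,1} and {2,3} *)
Definition twoK2 : rel 'I_4 := fun x y => (x %/ 2 == y %/ 2)%N && (x != y).

Definition cube (d : nat) := {ffun 'I_d -> bool}.
Definition cube_adj (d : nat) : rel (cube d) :=
  fun x y => #|[set i : 'I_d | x i != y i]| == 1%N.

Definition chi_2K2_cube (d : nat) : nat := chi_H twoK2 (@cube_adj d).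

From mathcomp Require Import all_boot all_order all_algebra.
From mathcomp Require Import reals.
From mathcomp Require Import zify lra.
Import Order.TTheory GRing.Theory Num.Theory.
Set Implicit Arguments. Unset Strict Implicit. Unset Printing Implicit Defensive.

(* In a 2K2-avoiding coloring the union of two color classes A and B induces
   a 2K2-free bipartite graph, i.e. a chain graph: neighbourhoods are nested,
   so some a in A and b in B dominate all edges.  In Q_d two vertices have at
   most two common neighbours, so besides the edges at a or b there is at
   most one more edge, and none at all when a and b have full degree d;
   hence at most 2d - 1 edges run between two classes (d >= 3).  Counting the
   d 2^d ordered edges of Q_d class by class gives d 2^d <= k(k-1)(2d-1) for
   any such k-coloring, which is solved for k to get the bound for d >= 4.

   For d = 3 the same per-class count rules out 3 colors, and an explicit
   4-coloring is checked by computation; for d = 2 the parity coloring works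
   since Q_2 = C_4 has no induced 2K2 at all, and one color is never proper. *)

Section Induced2K2.
Variables (T : finType) (e : rel T).

Definition induced_2K2 (x y x' y' : T) : bool :=
  [&& e x y, e x' y', ~~ e x x', ~~ e x y', ~~ e y x' & ~~ e y y'].

Hypotheses (e_sym : symmetric e) (e_irr : irreflexive e).

Lemma induced_2K2P (S : {set T}) :
  reflect (exists x y x' y', [&& x \in S, y \in S, x' \in S & y' \in S] &&
                             induced_2K2 x y x' y')
          (has_induced_copy twoK2 e S).
Proof.
apply: (iffP existsP) => [[f /and3P [_ /forallP fS /forallP fe]]|].
  have E (i j : 'I_4) : e (f i) (f j) = twoK2 i j.
    by move: (fe i) => /forallP /(_ j) /eqP ->.
  exists (f (@Ordinal 4 0 isT)), (f (@Ordinal 4 1 isT)),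
    (f (@Ordinal 4 2 isT)), (f (@Ordinal 4 3 isT)).
  by rewrite !fS /induced_2K2 !E.
move=> [x [y [x' [y' /andP [/and4P [xS yS x'S y'S]]]]]].
move=> /and5P [exy ex'y' nxx' nxy' /andP [nyx' nyy']].
have ne u v : e u v -> u != v by apply: contraTneq => ->; rewrite e_irr.
exists [ffun i : 'I_4 => nth x [:: x; y; x'; y'] i].
apply/and3P; split.
- apply/injectiveP => i j; rewrite !ffunE.
  have dxy := ne _ _ exy; have dx'y' := ne _ _ ex'y'.
  have dxx' : x != x' by apply: contraNneq nxy' => ->.
  have dxy' : x != y' by apply: contraNneq nxx' => ->; rewrite e_sym.
  have dyx' : y != x' by apply: contraNneq nyy' => ->.
  have dyy' : y != y' by apply: contraNneq nyx' => ->; rewrite e_sym.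
  case: i => [[|[|[|[|i]]]] Hi] //; case: j => [[|[|[|[|j]]]] Hj] //= E;
    try (by apply: val_inj);
    by move: dxy dx'y' dxx' dxy' dyx' dyy'; rewrite E eqxx.
- by apply/forallP => -[[|[|[|[|i]]]] Hi]; rewrite ffunE.
- apply/forallP => i; apply/forallP => j; rewrite !ffunE.
  case: i => [[|[|[|[|i]]]] Hi] //; case: j => [[|[|[|[|j]]]] Hj] //=;
  rewrite /twoK2 /= ?e_irr ?exy ?ex'y' ?(negbTE nxx') ?(negbTE nxy')
    ?(negbTE nyx') ?(negbTE nyy') //.
  all: by rewrite e_sym ?exy ?ex'y' ?(negbTE nxx') ?(negbTE nxy')
    ?(negbTE nyx') ?(negbTE nyy').
Qed.

Definition chain_between (A B : {set T}) : Prop :=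
  forall x x' y y', x \in A -> x' \in A -> y \in B -> y' \in B ->
  e x y -> e x' y' -> x != x' -> y != y' -> e x y' || e x' y.

Lemma chain_between_sym (A B : {set T}) : chain_between A B -> chain_between B A.
Proof.
move=> hAB y y' x x' yB y'B xA x'A eyx ey'x' yy' xx'.
rewrite orbC e_sym (e_sym y).
by apply: hAB; rewrite // e_sym.
Qed.

Definition nbr_in (X : {set T}) (v : T) : {set T} := [set w in X | e v w].

Definition cross_edges (A B : {set T}) : {set T * T} :=
  [set p | [&& p.1 \in A, p.2 \in B & e p.1 p.2]].

(* The neighbourhoods in B of the vertices of A are nested, hence a vertex
   of A of maximum degree is adjacent to every vertex of B that has a
   neighbour in A. *)
Lemma chain_dominating (A B : {set T}) (x0 : T) : chain_between A B ->
  x0 \in A -> exists2 a, a \in A &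
    forall x y, x \in A -> y \in B -> e x y -> e a y.
Proof.
move=> hAB x0A; case: (arg_maxnP (fun x => #|nbr_in B x|) x0A) => a aA amax.
exists a => // x y xA yB exy; apply/negPn/negP => nay.
have xa : x != a by apply: contraNneq nay => <-.
have sub : nbr_in B a \subset nbr_in B x.
  apply/subsetP => y'; rewrite !inE => /andP [y'B eay'].
  have yy' : y != y' by apply: contraNneq nay => ->.
  have := hAB x a y y' xA aA yB y'B exy eay' xa yy'.
  by rewrite (negbTE nay) orbF y'B.
have : nbr_in B a \proper nbr_in B x by apply/properP; split => //; exists y;
  rewrite !inE ?yB ?exy ?(negbTE nay) ?andbF.
by move/proper_card; rewrite ltnNge => /negP; apply; apply: amax.
Qed.

Lemma card_cross_edgesE (A B : {set T}) :
  #|cross_edges A B| = \sum_(x in A) \sum_(y in B) e x y.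
Proof.
rewrite -sum1_card (eq_bigr (fun x => \sum_(y in B | e x y) 1)); last first.
  by move=> x _; rewrite big_mkcondr.
by rewrite pair_big_dep /=; apply: eq_bigl => -[x y]; rewrite inE /= andbA.
Qed.

Lemma card_cross_edges_sym (A B : {set T}) :
  #|cross_edges A B| = #|cross_edges B A|.
Proof.
rewrite !card_cross_edgesE exchange_big /=.
by apply: eq_bigr => y _; apply: eq_bigr => x _; rewrite e_sym.
Qed.

Definition color_class (k : nat) (c : {ffun T -> 'I_k}) (a : 'I_k) : {set T} :=
  [set x | c x == a].

Lemma avoiding_chain (k : nat) (c : {ffun T -> 'I_k}) (a b : 'I_k) :
  H_avoiding_coloring twoK2 e c ->
  chain_between (color_class c a) (color_class c b).
Proof.
move=> /andP [/forallP proper /forallP avoid] x x' y y'.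
rewrite !inE => /eqP xa /eqP x'a /eqP yb /eqP y'b exy ex'y' _ _.
have indep u v : c u = c v -> ~~ e u v.
  move=> cuv; apply/negP => euv.
  by move: (proper u) => /forallP /(_ v) /implyP /(_ euv); rewrite cuv eqxx.
move: (avoid a) => /forallP /(_ b); apply: contraNT => /norP [nxy' nx'y].
apply/induced_2K2P; exists x, y, x', y'.
rewrite !inE xa yb x'a y'b !eqxx orbT /induced_2K2 exy ex'y' nxy' (e_sym y) nx'y.
by rewrite /= !indep // ?xa ?x'a ?yb ?y'b.
Qed.

End Induced2K2.

Section Hypercube.
Variable d : nat.
Local Notation T := (cube d).
Local Notation e := (@cube_adj d).

Definition flip (x : T) (i : 'I_d) : T :=
  [ffun j => if j == i then ~~ x j else x j].

Lemma flipE (x : T) (i j : 'I_d) : flip x i j = (if j == i then ~~ x j else x j).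
Proof. by rewrite ffunE. Qed.

Lemma cube_adjP (x y : T) : reflect (exists i, y = flip x i) (e x y).
Proof.
apply: (iffP cards1P) => [[i Hi]|[i ->]]; exists i.
  apply/ffunP => j; rewrite flipE; move/setP: Hi => /(_ j); rewrite !inE.
  by case: (j =P i) => [->|_]; case: (x _); case: (y _).
by apply/setP => j; rewrite !inE flipE; case: (j =P i) => _; case: (x j).
Qed.

Lemma cube_adj_sym : symmetric e.
Proof.
move=> x y; rewrite /cube_adj.
by rewrite (_ : [set i | x i != y i] = [set i | y i != x i]) //; apply/setP => i;
  rewrite !inE eq_sym.
Qed.

Lemma cube_adj_irr : irreflexive e.
Proof.
move=> x; rewrite /cube_adj.
by rewrite (_ : [set i | x i != x i] = set0) ?cards0 //; apply/setP => i;
  rewrite !inE eqxx.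
Qed.

Lemma adj_flip (x : T) (i : 'I_d) : e x (flip x i).
Proof. by apply/cube_adjP; exists i. Qed.

Lemma flip_inj (x : T) : injective (flip x).
Proof.
move=> i j /ffunP /(_ i); rewrite !flipE eqxx.
by case: eqP => // _; case: (x i).
Qed.

Lemma flipC (x : T) (i j : 'I_d) : flip (flip x i) j = flip (flip x j) i.
Proof.
apply/ffunP => k; rewrite !flipE.
by case: (k =P i) => [->|]; case: (_ =P j) => [->|].
Qed.

Lemma flipK (x : T) (i : 'I_d) : flip (flip x i) i = x.
Proof. by apply/ffunP => k; rewrite !flipE; case: eqP => //; rewrite negbK. Qed.

Lemma card_cube : #|T| = 2 ^ d.
Proof. by rewrite card_ffun card_bool card_ord. Qed.

Lemma card_cube_nbr (x : T) : #|[set y | e x y]| = d.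
Proof.
rewrite (_ : [set y | e x y] = [set flip x i | i : 'I_d]).
  by rewrite card_imset ?card_ord //; apply: flip_inj.
by apply/setP => y; rewrite inE; apply/cube_adjP/imsetP => [[i ->]|[i _ ->]];
  exists i.
Qed.

Lemma sum_cube_adj (x : T) : \sum_y (e x y : nat) = d.
Proof.
rewrite -[RHS](card_cube_nbr x) -sum1_card [RHS]big_mkcond /=.
by apply: eq_bigr => y _; rewrite inE.
Qed.

Lemma card_nbr_in (X : {set T}) (v : T) : #|nbr_in e X v| <= d.
Proof.
apply: leq_trans (eq_leq (card_cube_nbr v)); apply: subset_leq_card.
by apply/subsetP => w; rewrite !inE => /andP [].
Qed.

Lemma flip2_diff (x : T) (i j k : 'I_d) : i != j ->
  (x k != flip (flip x i) j k) = (k == i) || (k == j).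
Proof.
move=> nij; rewrite !flipE.
case: (k =P i) => [->|_]; case: (_ =P j) => [E|] //=; try by case: (x _).
by move: nij; rewrite E eqxx.
Qed.

Lemma no_three_common_nbrs (x y z1 z2 z3 : T) : x != y ->
  e x z1 -> e z1 y -> e x z2 -> e z2 y -> e x z3 -> e z3 y ->
  z1 != z2 -> z1 != z3 -> z2 != z3 -> False.
Proof.
move=> nxy /cube_adjP [i1 ->] /cube_adjP [j1 E1] /cube_adjP [i2 ->]
  /cube_adjP [j2 E2] /cube_adjP [i3 ->] /cube_adjP [j3 E3] n12 n13 n23.
have dist2 i j : y = flip (flip x i) j -> i != j.
  by move=> E; apply: contra_neq nxy => ij; rewrite E ij flipK.
have diff k : (x k != y k) = (k == i1) || (k == j1).
  by rewrite E1 flip2_diff ?dist2.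
have differ i j : y = flip (flip x i) j -> x i != y i.
  by move=> E; rewrite E flip2_diff ?dist2 // eqxx.
have ne_i i j : flip x i != flip x j -> j != i by apply: contra_neq => ->.
move: (differ _ _ E2) (differ _ _ E3); rewrite !diff.
rewrite (negbTE (ne_i _ _ n12)) (negbTE (ne_i _ _ n13)) /= => /eqP i2j1 /eqP i3j1.
by move: (ne_i _ _ n23); rewrite i2j1 i3j1 eqxx.
Qed.

End Hypercube.

Section ChainEdges.
Variables (d : nat) (A B : {set cube d}) (a b : cube d).
Local Notation e := (@cube_adj d).
Local Notation E := (cross_edges e A B).

Hypotheses (chainAB : chain_between e A B) (aA : a \in A) (bB : b \in B)
  (eab : e a b)
  (domA : forall x y, x \in A -> y \in B -> e x y -> e a y)
  (domB : forall x y, x \in A -> y \in B -> e x y -> e x b).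

Definition inner_edges : {set cube d * cube d} :=
  [set p in E | (p.1 != a) && (p.2 != b)].

Lemma inner_edgesP (x y : cube d) : reflect
  [/\ x \in A, y \in B, e x y, x != a & y != b] ((x, y) \in inner_edges).
Proof.
rewrite !inE /=; apply: (iffP idP) => [/andP [/and3P [] ? ? ? /andP []]|[]] //.
by move=> -> -> -> -> ->.
Qed.

(* An inner edge xy lies on the 4-cycle x y a b, so y is determined by x:
   otherwise x and a would have three common neighbours. *)
Lemma inner_edges_fst (x y y' : cube d) :
  (x, y) \in inner_edges -> (x, y') \in inner_edges -> y = y'.
Proof.
move=> /inner_edgesP [xA yB exy xa yb] /inner_edgesP [_ y'B exy' _ y'b].
apply/eqP; apply/negP => /negP yy'.
have eya : e y a by rewrite cube_adj_sym (domA xA yB exy).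
have ey'a : e y' a by rewrite cube_adj_sym (domA xA y'B exy').
have eba : e b a by rewrite cube_adj_sym.
exact: (no_three_common_nbrs xa exy eya exy' ey'a (domB xA yB exy) eba).
Qed.

Lemma inner_edges_snd (x x' y : cube d) :
  (x, y) \in inner_edges -> (x', y) \in inner_edges -> x = x'.
Proof.
move=> /inner_edgesP [xA yB exy xa yb] /inner_edgesP [x'A _ ex'y x'a _].
apply/eqP; apply/negP => /negP xx'.
have eyx : e y x by rewrite cube_adj_sym.
have eyx' : e y x' by rewrite cube_adj_sym.
have eya : e y a by rewrite cube_adj_sym (domA xA yB exy).
exact: (no_three_common_nbrs yb eyx (domB xA yB exy) eyx' (domB x'A yB ex'y)
  eya eab).
Qed.

(* Two inner edges with distinct endpoints would, by the chain property,
   yield a cross edge, which is again inner and contradicts the previous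
   two facts; so there is at most one inner edge. *)
Lemma card_inner_edges : #|inner_edges| <= 1.
Proof.
apply/card_le1_eqP => -[x y] [x' y'] Rxy Rx'y'.
case: (x =P x') => [xx'|/eqP xx'].
  by rewrite -xx' in Rx'y' *; rewrite (inner_edges_fst Rxy Rx'y').
case: (y =P y') => [yy'|/eqP yy'].
  by rewrite -yy' in Rx'y' *; rewrite (inner_edges_snd Rxy Rx'y').
move: (Rxy) (Rx'y') => /inner_edgesP [xA yB exy xa yb]
  /inner_edgesP [x'A y'B ex'y' x'a y'b].
case/orP: (chainAB xA x'A yB y'B exy ex'y' xx' yy') => [exy'|ex'y].
  have Rxy' : (x, y') \in inner_edges by apply/inner_edgesP.
  by rewrite (inner_edges_fst Rxy Rxy') eqxx in yy'.
have Rx'y : (x', y) \in inner_edges by apply/inner_edgesP.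
by rewrite (inner_edges_snd Rxy Rx'y) eqxx in xx'.
Qed.

(* If a and b had all their neighbours in B and A, an inner edge xy could be
   shifted along a third direction into a second inner edge. *)
Lemma inner_edges_deficient : 3 <= d -> inner_edges != set0 ->
  (#|nbr_in e B a| < d) || (#|nbr_in e A b| < d).
Proof.
move=> d3 /set0Pn [[x y] /inner_edgesP [xA yB exy xa yb]].
rewrite !ltn_neqAle !card_nbr_in !andbT -negb_and; apply/negP => /andP [fa fb].
have all_in X v w : #|nbr_in e X v| == d -> e v w -> w \in X.
  move=> fv evw; have : nbr_in e X v = [set w | e v w].
    apply/eqP; rewrite eqEcard card_cube_nbr (eqP fv) leqnn andbT.
    by apply/subsetP => z; rewrite !inE => /andP [].
  by move/setP => /(_ w); rewrite !inE evw andbT => ->.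
have /cube_adjP [i xi] : e b x by rewrite cube_adj_sym (domB xA yB exy).
have /cube_adjP [j aj] : e b a by rewrite cube_adj_sym.
have ij : i != j by apply: contra_neq xa => ij; rewrite xi aj ij.
have /card_gt0P [k] : 0 < #|~: [set i; j]|.
  by have := cardsC [set i; j]; rewrite card_ord cards2 ij; lia.
rewrite !inE negb_or => /andP [ki kj].
have R2 : (flip b k, flip a k) \in inner_edges.
  apply/inner_edgesP; split.
  - by apply: all_in fb _; apply: adj_flip.
  - by apply: all_in fa _; apply: adj_flip.
  - by rewrite aj flipC adj_flip.
  - by rewrite aj; apply: contra_neq kj => /flip_inj ->.
  - rewrite aj flipC; apply: contra_neq kj => E.
    by have := congr1 (fun z => flip z j) E; rewrite flipK => /flip_inj.
have Rxy : (x, y) \in inner_edges by apply/inner_edgesP.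
have /card_le1_eqP /(_ _ _ Rxy R2) [] := card_inner_edges.
by rewrite xi => /flip_inj /eqP; rewrite (negbTE ki).
Qed.

(* Apart from the inner edges, every edge contains a or b, and the edge ab
   is counted twice when counting the edges at a and at b. *)
Lemma card_cross_edges_split :
  #|E| + 1 <= #|nbr_in e B a| + #|nbr_in e A b| + #|inner_edges|.
Proof.
pose Ea := [set (a, y) | y in nbr_in e B a].
pose Eb := [set (x, b) | x in nbr_in e A b].
have sub : E \subset (Ea :|: Eb) :|: inner_edges.
  apply/subsetP => -[x y]; rewrite inE /= => /and3P [xA yB exy].
  rewrite !in_setU; case: (x =P a) => [->|/eqP xa].
    by rewrite imset_f // inE yB (domA xA yB exy).
  case: (y =P b) => [->|/eqP yb].
    by rewrite (imset_f (fun x => (x, b))) ?orbT // inE xA cube_adj_sym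
      (domB xA yB exy).
  by apply/orP; right; apply/inner_edgesP.
have cEa : #|Ea| = #|nbr_in e B a| by rewrite card_imset // => y y' [].
have cEb : #|Eb| = #|nbr_in e A b| by rewrite card_imset // => x x' [].
have ab : (a, b) \in Ea :&: Eb.
  by rewrite inE imset_f ?(imset_f (fun x => (x, b))) // !inE ?aA ?bB
    ?eab // cube_adj_sym.
have := subset_leq_card sub; have := cardsUI (Ea :|: Eb) inner_edges.
have := cardsUI Ea Eb.
have : 0 < #|Ea :&: Eb| by apply/card_gt0P; exists (a, b).
rewrite cEa cEb; move: #|E| #|Ea :&: Eb| #|Ea :|: Eb| #|Ea :|: Eb :|: inner_edges|
  #|nbr_in e B a| #|nbr_in e A b| #|inner_edges| => *; lia.
Qed.

End ChainEdges.

Lemma chain_cross_edges (d : nat) (A B : {set cube d}) : 3 <= d ->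
  chain_between (@cube_adj d) A B ->
  #|cross_edges (@cube_adj d) A B| <= 2 * d - 1.
Proof.
move=> d3 chainAB.
have [E0|[[x0 y0]]] := set_0Vmem (cross_edges (@cube_adj d) A B).
  by rewrite E0 cards0.
rewrite inE /= => /and3P [x0A y0B e0].
have [a aA domA] := chain_dominating chainAB x0A.
have chainBA := chain_between_sym (@cube_adj_sym d) chainAB.
have [b bB domB'] := chain_dominating chainBA y0B.
have domB x y : x \in A -> y \in B -> cube_adj x y -> cube_adj x b.
  by move=> xA yB exy; rewrite cube_adj_sym (domB' y x) // cube_adj_sym.
have eab : cube_adj a b by rewrite (domB a y0) ?(domA x0 y0).
have := card_cross_edges_split aA bB eab domA domB.
have := card_inner_edges chainAB eab domA domB.
have := card_nbr_in B a; have := card_nbr_in A b.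
have := inner_edges_deficient chainAB aA bB eab domA domB d3.
move: #|cross_edges _ A B| #|nbr_in _ B a| #|nbr_in _ A b| => ne na nb.
case: eqP => [->|_ /(_ isT) /orP]; rewrite ?cards0; last case; lia.
Qed.

Section ColoringCount.
Variables (d k : nat) (c : {ffun cube d -> 'I_k}).
Hypothesis avoid : H_avoiding_coloring twoK2 (@cube_adj d) c.
Local Notation e := (@cube_adj d).
Local Notation cls := (color_class c).

Definition class_edges (a b : 'I_k) : nat := #|cross_edges e (cls a) (cls b)|.

Lemma class_edges_diag (a : 'I_k) : class_edges a a = 0.
Proof.
rewrite /class_edges card_cross_edgesE big1 // => x; rewrite inE => /eqP xa.
rewrite big1 // => y; rewrite inE => /eqP ya.
move: avoid => /andP [/forallP /(_ x) /forallP /(_ y) /implyP proper _].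
by case: (e x y) proper => // /(_ isT); rewrite xa ya eqxx.
Qed.

Lemma class_edges_sym (a b : 'I_k) : class_edges a b = class_edges b a.
Proof. exact/card_cross_edges_sym/cube_adj_sym. Qed.

(* Each vertex of class b has d neighbours, spread over the color classes. *)
Lemma sum_class_edges (b : 'I_k) : \sum_a class_edges a b = d * #|cls b|.
Proof.
have -> : \sum_a class_edges a b = \sum_x \sum_(y in cls b) e x y.
  rewrite [RHS](partition_big c xpredT) //=; apply: eq_bigr => a _.
  by rewrite /class_edges card_cross_edgesE; apply: eq_bigl => x; rewrite inE.
rewrite exchange_big /=.
rewrite (eq_bigr (fun => d)) => [|y _]; first by rewrite sum_nat_const mulnC.
by under eq_bigr do rewrite cube_adj_sym; rewrite sum_cube_adj.
Qed.

Lemma class_edges_le (a b : 'I_k) : 3 <= d -> class_edges a b <= 2 * d - 1.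
Proof.
move=> d3; apply: chain_cross_edges d3 _.
exact: (avoiding_chain (@cube_adj_sym d) (@cube_adj_irr d) (a := a) (b := b)
  avoid).
Qed.

Lemma sum_card_classes : \sum_a #|cls a| = 2 ^ d.
Proof.
rewrite -card_cube -sum1_card (partition_big c xpredT) //=.
by apply: eq_bigr => a _; rewrite -sum1_card; apply: eq_bigl => x; rewrite inE.
Qed.

(* Double counting: the d 2^d ordered edges of Q_d run between distinct
   classes, at most 2d - 1 of them for each ordered pair of classes. *)
Lemma class_edges_count : 3 <= d -> d * 2 ^ d <= k * (k - 1) * (2 * d - 1).
Proof.
move=> d3; rewrite -sum_card_classes big_distrr /=.
have -> : k * (k - 1) * (2 * d - 1) =
    \sum_(b < k) \sum_(a < k) (if a == b then 0 else 2 * d - 1).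
  rewrite -mulnA -[in LHS](card_ord k) -sum_nat_const; apply: eq_bigr => b _.
  rewrite (bigD1 b) //= eqxx add0n (eq_bigr (fun => 2 * d - 1)).
    by rewrite sum_nat_const cardC1 card_ord subn1.
  by move=> a /negbTE ->.
apply: leq_sum => b _; rewrite -sum_class_edges; apply: leq_sum => a _.
by case: eqP => [->|_]; rewrite ?class_edges_diag ?class_edges_le.
Qed.

End ColoringCount.

(* With three classes of sizes s0, s1, s2, the edges between the first two
   number (d s0 + d s1 - d s2) / 2 <= 2d - 1, so s0 + s1 <= s2 + 3, and
   likewise for the other pairs.  As s0 + s1 + s2 = 2^d is even, every class
   then has at least 2^(d-1) - 1 vertices, which is too many for d >= 3. *)
Lemma cube_not_3_colorable (d : nat) : 3 <= d ->
  ~~ H_avoiding_colorable twoK2 (@cube_adj d) 3.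
Proof.
move=> d3; apply/existsP => -[c avoid].
pose i0 : 'I_3 := ord0; pose i1 : 'I_3 := lift ord0 ord0.
pose i2 : 'I_3 := lift ord0 (lift ord0 ord0).
have col b := sum_class_edges c b.
have le a b := class_edges_le avoid a b d3.
have sym := class_edges_sym c.
have diag := class_edges_diag avoid.
have := sum_card_classes c; have := col i0; have := col i1; have := col i2.
rewrite !big_ord_recl !big_ord0 !diag !addn0 (sym i1 i0) (sym i2 i0) (sym i2 i1).
have := le i0 i1; have := le i0 i2; have := le i1 i2.
have [M -> M4] : exists2 M, 2 ^ d = 2 * M & 4 <= M.
  exists (2 ^ d.-1); first by rewrite -expnS prednK // (leq_trans _ d3).
  by rewrite (@leq_trans (2 ^ 2)) // leq_pexp2l //; lia.
rewrite /i0 /i1 /i2 !add0n.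
move: (class_edges c _ _) (class_edges c _ _) (class_edges c _ _) => p01 p02 p12.
move: #|color_class c _| #|color_class c _| #|color_class c _| => s0 s1 s2.
move=> le12 le02 le01 e2 e1 e0 sizes.
have pair_le x y z p : d * (x + y) = d * z + 2 * p -> p <= 2 * d - 1 ->
    x + y <= z + 3.
  move=> E lp; rewrite -ltnS -(ltn_pmul2l (_ : 0 < d)) ?(leq_trans _ d3) //.
  rewrite E; lia.
have h01 : s0 + s1 <= s2 + 3 by apply: pair_le le01; rewrite mulnDr; lia.
have h02 : s0 + s2 <= s1 + 3 by apply: pair_le le02; rewrite mulnDr; lia.
have h12 : s1 + s2 <= s0 + 3 by apply: pair_le le12; rewrite mulnDr; lia.
lia.
Qed.

Lemma bigmin_le (I : eqType) (r : seq I) (P : pred I) (F : I -> nat) x i :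
  i \in r -> P i -> \big[minn/x]_(j <- r | P j) F j <= F i.
Proof.
elim: r => // j r IH; rewrite inE big_cons => /orP [/eqP <- -> | ir Pi].
  exact: geq_minl.
by case: (P j); rewrite ?geq_min IH ?orbT.
Qed.

Section ChiH.
Variables (TH : finType) (eH : rel TH) (TG : finType) (eG : rel TG).

Lemma chi_H_ind (P : nat -> Prop) : P #|TG| ->
  (forall k, H_avoiding_colorable eH eG k -> P k) -> P (chi_H eH eG).
Proof.
move=> PT Pk; apply: big_ind => //; last by move=> i /Pk.
by move=> x y Px Py; rewrite /minn; case: ifP.
Qed.

Lemma chi_H_eq (m : nat) : m <= #|TG| -> H_avoiding_colorable eH eG m ->
  (forall k, k < m -> ~~ H_avoiding_colorable eH eG k) -> chi_H eH eG = m.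
Proof.
move=> mT colm below; apply/eqP; rewrite eqn_leq; apply/andP; split.
  have mT' : m < #|TG|.+1 by [].
  exact: (bigmin_le (fun k : 'I_#|TG|.+1 => (k : nat)) #|TG|
    (mem_index_enum (Ordinal mT')) colm).
apply: (@chi_H_ind (fun k => m <= k)) => // k colk.
by rewrite leqNgt; apply: contraL colk => /below.
Qed.

End ChiH.

Section ParityColoring.
Variable d : nat.

(* Q_d is bipartite: flipping one coordinate changes the parity. *)
Definition parity (x : cube d) : bool := \big[addb/false]_(i < d) x i.

Lemma parity_flip (x : cube d) (i : 'I_d) : parity (flip x i) = ~~ parity x.
Proof.
rewrite /parity (bigD1 i) // [in RHS](bigD1 i) //= flipE eqxx -addNb.
congr (_ (+) _).
by apply: eq_bigr => j /negbTE ji; rewrite flipE ji.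
Qed.

Definition parity_coloring : {ffun cube d -> 'I_2} :=
  [ffun x => if parity x then ord_max else ord0].

Lemma parity_coloring_proper : proper_coloring (@cube_adj d) parity_coloring.
Proof.
apply/forallP => x; apply/forallP => y; apply/implyP => /cube_adjP [i ->].
by rewrite !ffunE parity_flip; case: (parity x).
Qed.

(* A single edge already forces two colors. *)
Lemma proper_cube_two_colors (k : nat) (c : {ffun cube d -> 'I_k}) :
  0 < d -> proper_coloring (@cube_adj d) c -> 1 < k.
Proof.
move=> d0 /forallP /(_ [ffun => false]) /forallP
  /(_ (flip [ffun => false] (Ordinal d0))) /implyP /(_ (adj_flip _ _)).
case: k c => [|[|k]] c //; first by case: (c _).
by case: (c _) => [[]] // ?; case: (c _) => [[]].
Qed.

End ParityColoring.

(* Q_2 is a 4-cycle, which has no induced 2K2: the two vertices of a second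
   edge avoiding the neighbourhood of x must both be the vertex opposite x. *)
Lemma cube2_no_induced_2K2 (S : {set cube 2}) :
  ~~ has_induced_copy twoK2 (@cube_adj 2) S.
Proof.
apply/negP => /(induced_2K2P (@cube_adj_sym 2) (@cube_adj_irr 2)).
move=> [x [_ [x' [y' /andP [_ /and5P [_ ex'y' nxx' nxy' _]]]]]].
pose far := ~: (x |: [set z | cube_adj x z]).
have farP z : ~~ cube_adj x z -> z != x -> z \in far.
  by move=> nxz zx; rewrite !inE negb_or zx nxz.
have card_far : #|far| <= 1.
  have := cardsC (x |: [set z | cube_adj x z]).
  by rewrite -/far cardsU1 card_cube_nbr card_cube inE cube_adj_irr /=; lia.
have x'x : x' != x by apply: contraNneq nxy' => <-.
have y'x : y' != x by apply: contraNneq nxx' => <-; rewrite cube_adj_sym.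
move/card_le1_eqP: card_far => /(_ x' y' (farP _ nxx' x'x) (farP _ nxy' y'x)).
by move=> eq_x'y'; rewrite eq_x'y' cube_adj_irr in ex'y'.
Qed.

(* Hence on Q_2 every proper coloring, e.g. the parity one, avoids 2K2. *)
Lemma parity_coloring2_avoiding :
  H_avoiding_coloring twoK2 (@cube_adj 2) (parity_coloring 2).
Proof.
rewrite /H_avoiding_coloring parity_coloring_proper.
by apply/forallP => a; apply/forallP => b; apply: cube2_no_induced_2K2.
Qed.

(* An explicit 2K2-avoiding 4-coloring of Q_3, checked by computation on a
   concrete encoding of the vertices as triples of booleans. *)
Section CubeThree.
Local Notation triple := (bool * bool * bool)%type.

Definition triple3 (x : cube 3) : triple :=
  (x ord0, x (lift ord0 ord0), x (lift ord0 (lift ord0 ord0))).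

Definition triples : seq triple :=
  [:: (false, false, false); (false, false, true); (false, true, false);
      (false, true, true); (true, false, false); (true, false, true);
      (true, true, false); (true, true, true)].

Lemma triple3_in (x : cube 3) : triple3 x \in triples.
Proof. by rewrite /triple3; case: (x _); case: (x _); case: (x _). Qed.

Definition adj3 (t s : triple) : bool :=
  (t.1.1 != s.1.1) + (t.1.2 != s.1.2) + (t.2 != s.2) == 1.

Lemma cube_adj3 (x y : cube 3) : cube_adj x y = adj3 (triple3 x) (triple3 y).
Proof.
rewrite /cube_adj -sum1_card big_mkcond /= !big_ord_recl big_ord0 !inE.
by rewrite /adj3 addn0 addnA.
Qed.

Definition color3 (t : triple) : nat :=
  nth 0 [:: 0; 2; 3; 0; 3; 1; 1; 2] (4 * t.1.1 + 2 * t.1.2 + t.2).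

Lemma color3_lt (t : triple) : color3 t < 4.
Proof. by case: t => [[[] []] []]. Qed.

Definition coloring3 : {ffun cube 3 -> 'I_4} :=
  [ffun x => Ordinal (color3_lt (triple3 x))].

Lemma color3_proper :
  all (fun t => all (fun s => adj3 t s ==> (color3 t != color3 s)) triples)
    triples.
Proof. by vm_compute. Qed.

Lemma color3_avoiding :
  all (fun t1 => all (fun t2 => all (fun t3 => all (fun t4 =>
    induced_2K2 adj3 t1 t2 t3 t4 ==> all (fun a => all (fun b =>
      ~~ all (fun t => (color3 t == a) || (color3 t == b)) [:: t1; t2; t3; t4])
      (iota 0 4)) (iota 0 4)) triples) triples) triples) triples.
Proof. by vm_compute. Qed.

Lemma coloring3_avoiding : H_avoiding_coloring twoK2 (@cube_adj 3) coloring3.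
Proof.
apply/andP; split.
  apply/forallP => x; apply/forallP => y; apply/implyP.
  rewrite cube_adj3 !ffunE -val_eqE /=.
  by move/allP: color3_proper => /(_ _ (triple3_in x)) /allP
    /(_ _ (triple3_in y)) /implyP.
apply/forallP => a; apply/forallP => b; apply/negP.
move=> /(induced_2K2P (@cube_adj_sym 3) (@cube_adj_irr 3)).
move=> [x [y [x' [y' /andP [/and4P [xS yS x'S y'S] pat]]]]].
move: pat xS yS x'S y'S; rewrite /induced_2K2 !cube_adj3 !inE !ffunE -!val_eqE /=.
move/allP: color3_avoiding => /(_ _ (triple3_in x)) /allP /(_ _ (triple3_in y))
  /allP /(_ _ (triple3_in x')) /allP /(_ _ (triple3_in y')) /implyP check pat.
move: (check pat) => /allP /(_ a); rewrite mem_iota ltn_ord => /(_ isT) /allP.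
move=> /(_ b); rewrite mem_iota ltn_ord /= andbT => /(_ isT) /negP noncopy.
by move=> *; apply: noncopy; apply/and4P.
Qed.

End CubeThree.

(* The counting bound holds for chi_2K2(Q_d) itself (trivially so for the
   default value 2^d). *)
Lemma chi_2K2_cube_count (d : nat) : 3 <= d ->
  d * 2 ^ d <= chi_2K2_cube d * (chi_2K2_cube d - 1) * (2 * d - 1).
Proof.
move=> d3.
apply: (@chi_H_ind _ _ _ _ (fun k => d * 2 ^ d <= k * (k - 1) * (2 * d - 1))).
  rewrite card_cube; have : 2 <= 2 ^ d.
    by rewrite (@leq_trans (2 ^ 1)) ?leq_pexp2l //; lia.
  by move: (2 ^ d) => N N2; nia.
by move=> k /existsP [c avoid]; apply: class_edges_count avoid d3.
Qed.

Local Open Scope ring_scope.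

(* Solving k (k - 1) (2d - 1) >= d 2^d for k:
   (k - 1/2)^2 >= k (k - 1) >= d 2^d / (2d - 1). *)
Lemma count_bound_real (R : realType) (d k : nat) : (1 <= d)%N ->
  (d * 2 ^ d <= k * (k - 1) * (2 * d - 1))%N ->
  Num.sqrt ((d%:R / (2 * d%:R - 1)) * 2%:R ^+ d) + 2%:R^-1 <= (k%:R : R).
Proof.
move=> d1 count.
have k1 : (1 <= k)%N.
  by case: k count => //; rewrite !mul0n leqn0 muln_eq0 expn_eq0 /=; case: d d1.
have d_pos : (0 : R) < 2 * d%:R - 1.
  have : (1 : R) <= d%:R by rewrite ler1n.
  lra.
have count_R : (d%:R * 2%:R ^+ d : R) <= k%:R * (k%:R - 1) * (2 * d%:R - 1).
  rewrite -natrX -natrM -(natrB _ k1) -[2 * d%:R]natrM.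
  rewrite -(natrB _ (_ : 1 <= 2 * d)%N) ?muln_gt0 //.
  by rewrite -!natrM ler_nat.
have square : (d%:R / (2 * d%:R - 1)) * 2%:R ^+ d <= (k%:R - 2^-1 : R) ^+ 2.
  rewrite mulrAC ler_pdivrMr //; apply: (le_trans count_R).
  by rewrite ler_wpM2r //; [lra | nra].
have k_half : (0 : R) <= k%:R - 2^-1.
  have : (1 : R) <= k%:R by rewrite ler1n.
  lra.
by have := ler_wsqrtr square; rewrite sqrtr_sqr ger0_norm //; lra.
Qed.

Theorem corollary5 :
  chi_2K2_cube 2 = 2%N /\ chi_2K2_cube 3 = 4%N /\
  forall (R : realType) (d : nat), (4 <= d)%N ->
    Num.sqrt ((d%:R / (2 * d%:R - 1)) * 2%:R ^+ d) + 2%:R^-1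
      <= ((chi_2K2_cube d)%:R : R).
Proof.
split; [|split].
- apply: chi_H_eq; first by rewrite card_cube.
    by apply/existsP; exists (parity_coloring 2);
      apply: parity_coloring2_avoiding.
  move=> k k2; apply/existsP => -[c /andP [proper _]].
  have := proper_cube_two_colors (isT : 0 < 2)%N proper.
  by rewrite ltnNge -ltnS k2.
- apply: chi_H_eq; first by rewrite card_cube.
    by apply/existsP; exists coloring3; apply: coloring3_avoiding.
  move=> k; rewrite ltnS leq_eqVlt => /orP [/eqP -> | k2].
    exact: cube_not_3_colorable.
  apply/existsP => -[c /class_edges_count /(_ isT)].
  by case: k c k2 => [|[|[|]]].
- move=> R d d4; apply: count_bound_real; first by apply: leq_trans d4.
  by apply: chi_2K2_cube_count; apply: leq_trans d4.
Qed.
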